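(* For every small model $M\preceq\mathbb{C}$ and every full $C\supseteq M$, every $M$-f.s. sequence $\langle A_i:i\in I\rangle$ over $C$ is an order-congruence over $C$.
   Context: Work in a monster model $\mathbb{C}$ of an arbitrary complete theory. For $B\supseteq M$, $\mathrm{tp}(A/B)$ is finitely satisfied in $M$ if each of its formulas is satisfied by a tuple from $M$. $C\supseteq M$ is full if every type in $S_n(M)$, for every $n$, is realized in $C$. $A_{<i}=\bigcup_{j<i}A_j$. An $M$-f.s. sequence over $C$ is a sequence of sets $\langle A_i:i\in I\rangle$ with $\mathrm{tp}(A_i/A_{<i}C)$ finitely satisfied in $M$ for every $i$. It is an order-congruence over $C$ if for every $i^*\in I$, all $i^*\le i_1<\dots<i_n$ and $i^*\le j_1<\dots<j_n$ in $I$, and all finite tuples $\bar a_k$ from $A_{i_k}$, $\bar b_k$ from $A_{j_k}$ with $\mathrm{tp}(\bar a_k/C)=\mathrm{tp}(\bar b_k/C)$ ($k=1,\dots,n$), we have $\mathrm{tp}(\bar a_1\dots\bar a_n/CA_{<i^*})=\mathrm{tp}(\bar b_1\dots\bar b_n/CA_{<i^*})$. *)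

From mathcomp Require Import all_boot all_order.
Set Implicit Arguments. Unset Strict Implicit. Unset Printing Implicit Defensive.
Import Order.TTheory.

Record signature := Signature {
  fsym : Type; farity : fsym -> nat;
  rsym : Type; rarity : rsym -> nat }.

(* A structure for the signature (the monster model). *)
Record structure (L : signature) := Structure {
  carrier :> Type;
  funs : forall f : fsym L, ('I_(farity f) -> carrier) -> carrier;
  rels : forall r : rsym L, ('I_(rarity r) -> carrier) -> Prop }.

Inductive term (L : signature) : Type :=
  | Var : nat -> term L
  | App : forall f : fsym L, ('I_(farity f) -> term L) -> term L.

Inductive formula (L : signature) : Type :=
  | Eqf : term L -> term L -> formula L
  | Relf : forall r : rsym L, ('I_(rarity r) -> term L) -> formula L
  | Neg : formula L -> formula L
  | And : formula L -> formula L -> formula L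
  | Ex : nat -> formula L -> formula L.

Section Semantics.
Variables (L : signature) (S : structure L).

Fixpoint eval (v : nat -> S) (t : term L) : S :=
  match t with
  | Var i => v i
  | App f args => funs (fun j => eval v (args j))
  end.

Definition upd (v : nat -> S) (x : nat) (a : S) : nat -> S :=
  fun i => if i == x then a else v i.

Fixpoint sat_in (P : S -> Prop) (v : nat -> S) (phi : formula L) : Prop :=
  match phi with
  | Eqf t1 t2 => eval v t1 = eval v t2
  | Relf r args => rels (fun j => eval v (args j))
  | Neg psi => ~ sat_in P v psi
  | And psi chi => sat_in P v psi /\ sat_in P v chi
  | Ex x psi => exists a, P a /\ sat_in P (upd v x a) psi
  end.

Definition sat (v : nat -> S) (phi : formula L) : Prop :=
  sat_in (fun _ => True) v phi.

Definition elem_sub (M : S -> Prop) : Prop :=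
  (exists m, M m) /\
  (forall (f : fsym L) (args : 'I_(farity f) -> S),
      (forall j, M (args j)) -> M (funs args)) /\
  (forall (phi : formula L) (v : nat -> S),
      (forall i, M (v i)) -> (sat_in M v phi <-> sat v phi)).

(* Plugging a finite tuple a (indexed by a finite type X, enumerated by
   enum_val) into the variables 0, ..., #|X|-1; the remaining variables
   are given by e (they play the role of parameters). *)
Definition plug (X : finType) (a : X -> S) (e : nat -> S) : nat -> S :=
  fun i => match (insub i : option 'I_#|X|) with
           | Some j => a (enum_val j)
           | None => e i
           end.

Definition tp_eq (B : S -> Prop) (X : finType) (a b : X -> S) : Prop :=
  forall (phi : formula L) (e : nat -> S),
    (forall i, #|X| <= i -> B (e i)) ->
    (sat (plug a e) phi <-> sat (plug b e) phi).

Definition fs_in (M B A : S -> Prop) : Prop :=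
  forall (n : nat) (a : 'I_n -> S) (e : nat -> S) (phi : formula L),
    (forall j, A (a j)) -> (forall i, n <= i -> B (e i)) ->
    sat (plug a e) phi ->
    exists m : 'I_n -> S, (forall j, M (m j)) /\ sat (plug m e) phi.

(* p is a type in S_n(M): a complete set of L(M)-formulas in the
   variables 0..n-1 which is consistent with the theory of S with
   parameters from M, i.e. finitely satisfiable in S.  An L(M)-formula is
   a pair (phi, e) with e giving parameters from M to variables >= n. *)
Definition complete_type (M : S -> Prop) (n : nat)
    (p : formula L -> (nat -> S) -> Prop) : Prop :=
  (forall phi e, p phi e -> forall i, n <= i -> M (e i)) /\
  (forall phi e, (forall i, n <= i -> M (e i)) -> p phi e \/ p (Neg phi) e) /\
  (forall (m : nat) (fam : 'I_m -> formula L * (nat -> S)),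
      (forall k, p (fam k).1 (fam k).2) ->
      exists a : 'I_n -> S, forall k, sat (plug a (fam k).2) (fam k).1).

Definition full (M C : S -> Prop) : Prop :=
  (forall x, M x -> C x) /\
  forall (n : nat) (p : formula L -> (nat -> S) -> Prop),
    complete_type M n p ->
    exists c : 'I_n -> S, (forall j, C (c j)) /\
      forall phi e, p phi e -> sat (plug c e) phi.

Section Sequences.
Variables (d : Order.disp_t) (I : orderType d).

Definition A_lt (A : I -> S -> Prop) (i : I) : S -> Prop :=
  fun x => exists j, (j < i)%O /\ A j x.

Definition CA_lt (C : S -> Prop) (A : I -> S -> Prop) (i : I) : S -> Prop :=
  fun x => C x \/ A_lt A i x.

Definition fs_sequence (M C : S -> Prop) (A : I -> S -> Prop) : Prop :=
  forall i, fs_in M (CA_lt C A i) (A i).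

Definition concat_tuple (n : nat) (l : 'I_n -> nat)
    (a : forall k : 'I_n, 'I_(l k) -> S) : {k : 'I_n & 'I_(l k)} -> S :=
  fun t => a (tag t) (tagged t).

Definition order_congruence (C : S -> Prop) (A : I -> S -> Prop) : Prop :=
  forall (istar : I) (n : nat) (ix jx : 'I_n -> I) (l : 'I_n -> nat)
         (a b : forall k : 'I_n, 'I_(l k) -> S),
    (forall k, (istar <= ix k)%O) -> (forall k, (istar <= jx k)%O) ->
    (forall k k' : 'I_n, k < k' -> (ix k < ix k')%O) ->
    (forall k k' : 'I_n, k < k' -> (jx k < jx k')%O) ->
    (forall k p, A (ix k) (a k p)) -> (forall k p, A (jx k) (b k p)) ->
    (forall k, tp_eq C (a k) (b k)) ->
    tp_eq (CA_lt C A istar) (concat_tuple a) (concat_tuple b).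

End Sequences.
End Semantics.

From mathcomp Require Import all_boot all_order.
From Stdlib Require Import FunctionalExtensionality Classical.
Set Implicit Arguments. Unset Strict Implicit. Unset Printing Implicit Defensive.
Import Order.TTheory.

(* Fix istar, increasing index tuples ix, jx above istar and
   blocks a k in A (ix k), b k in A (jx k) with tp(a k/C) = tp(b k/C).  By
   induction on m we show that the concatenations of the a's and of the b's
   have the same type over C A_{<istar} as long as only blocks k < m are used.
   For the step, take a formula in the blocks up to k and parameters; its
   remaining ("old") values z_a, z_b have the same type over M by induction,
   and fullness of C realises this type by some z' in C.  Because
   tp(a k / C A_{<ix k}) is finitely satisfied in M, z_a may be replaced by z'
   (fs_type_invariance: a formula separating (a k, z_a) from (a k, z') would
   be witnessed in M, separating z_a from z' over M); likewise for b.  Finally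
   tp(a k/C) = tp(b k/C) with z' in C closes the chain. *)

Section Syntax.
Variable L : signature.

Fixpoint tbound (t : term L) : nat :=
  match t with
  | Var i => i.+1
  | App f args => \max_(j < farity f) tbound (args j)
  end.

Fixpoint fbound (phi : formula L) : nat :=
  match phi with
  | Eqf t1 t2 => maxn (tbound t1) (tbound t2)
  | Relf r args => \max_(j < rarity r) tbound (args j)
  | Neg psi => fbound psi
  | And psi chi => maxn (fbound psi) (fbound chi)
  | Ex _ psi => fbound psi
  end.

Fixpoint trename (s : nat -> nat) (t : term L) : term L :=
  match t with
  | Var i => Var L (s i)
  | App f args => App (fun j => trename s (args j))
  end.

End Syntax.

Section Semantics.
Variables (L : signature) (S : structure L).
Implicit Types (phi : formula L) (v w : nat -> S) (P B : S -> Prop).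

Lemma eval_rename v (s : nat -> nat) (t : term L) :
  eval v (trename s t) = eval (fun i => v (s i)) t.
Proof.
elim: t => [i|f args IH] //=.
by congr funs; apply: functional_extensionality => j; exact: IH.
Qed.

Lemma eval_bound v w (t : term L) :
  (forall i, i < tbound t -> v i = w i) -> eval v t = eval w t.
Proof.
elim: t => [i|f args IH] /= Hvw; first exact: Hvw.
congr funs; apply: functional_extensionality => j; apply: IH => i Hi.
by apply: Hvw; apply: leq_trans Hi (leq_bigmax_cond (F := fun j => tbound (args j)) j _).
Qed.

Lemma sat_bound P phi v w :
  (forall i, i < fbound phi -> v i = w i) -> (sat_in P v phi <-> sat_in P w phi).
Proof.
elim: phi v w => [t1 t2|r args|psi IH|psi IH chi IH'|x psi IH] v w /= Hvw.
- by rewrite (@eval_bound v w t1) ?(@eval_bound v w t2) // => i Hi;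
    apply: Hvw; rewrite leq_max Hi ?orbT.
- have -> // : (fun j => eval v (args j)) = (fun j => eval w (args j)).
  apply: functional_extensionality => j; apply: eval_bound => i Hi; apply: Hvw.
  exact: leq_trans Hi (leq_bigmax_cond (F := fun j => tbound (args j)) j _).
- by rewrite (IH v w Hvw).
- by rewrite (IH v w) ?(IH' v w) // => i Hi; apply: Hvw; rewrite leq_max Hi ?orbT.
- have Hupd a : sat_in P (upd v x a) psi <-> sat_in P (upd w x a) psi.
    by apply: IH => i Hi; rewrite /upd; case: (i == x); last exact: Hvw.
  by split=> -[a [Pa Ha]]; exists a; split=> //; apply/Hupd.
Qed.

Lemma rename_ex P phi (s : nat -> nat) :
  exists phi' : formula L, forall v, sat_in P v phi' <-> sat_in P (fun i => v (s i)) phi.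
Proof.
elim: phi s => [t1 t2|r args|psi IH|psi IH chi IH'|x psi IH] s.
- by exists (Eqf (trename s t1) (trename s t2)) => v /=; rewrite !eval_rename.
- exists (Relf (fun j => trename s (args j))) => v /=.
  have -> // : (fun j => eval v (trename s (args j))) =
               (fun j => eval (fun i => v (s i)) (args j)).
  by apply: functional_extensionality => j; rewrite eval_rename.
- by have [psi' H] := IH s; exists (Neg psi') => v /=; rewrite H.
- have [psi' H] := IH s; have [chi' H'] := IH' s.
  by exists (And psi' chi') => v /=; rewrite H H'.
- (* bind a variable y fresh for the image of the relevant variables of psi *)
  pose y := (\max_(i < fbound psi) s i).+1.
  have [psi' H] := IH (fun i => if i == x then y else s i).
  exists (Ex y psi') => v /=.
  have Hupd a : sat_in P (upd v y a) psi' <-> sat_in P (upd (fun i => v (s i)) x a) psi.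
    rewrite H; apply: sat_bound => i Hi; rewrite /upd; case: (i == x); rewrite ?eqxx //.
    have : s i < y by rewrite ltnS (leq_bigmax (F := fun i : 'I__ => s i) (Ordinal Hi)).
    by rewrite ltn_neqAle => /andP[/negbTE -> _].
  by split=> -[a [Pa Ha]]; exists a; split=> //; apply/Hupd.
Qed.

(* An assignment of the variables in which each variable is either a position
   of a tuple indexed by J (inl) or a parameter (inr). *)
Definition valu {J : Type} (x : J -> S) (u : J + S) : S :=
  match u with inl t => x t | inr s => s end.

Definition asg {J : Type} (x : J -> S) (rho : nat -> J + S) : nat -> S :=
  fun i => valu x (rho i).

Definition reassign {J J' : Type} (sigma : J' -> J + S) (u : J' + S) : J + S :=
  match u with inl t => sigma t | inr s => inr s end.

Lemma asg_reassign (J J' : Type) (y : J -> S) (sigma : J' -> J + S) rho :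
  asg y (fun i => reassign sigma (rho i)) = asg (fun t => valu y (sigma t)) rho.
Proof. by apply: functional_extensionality => i; rewrite /asg; case: (rho i). Qed.

(* x and y have the same type over B as far as the positions satisfying Q
   are concerned; this is the form of tp(x/B) = tp(y/B) used in the proof. *)
Definition tp_eq_on B {J : Type} (Q : J -> Prop) (x y : J -> S) : Prop :=
  forall phi (rho : nat -> J + S),
    (forall i s, rho i = inr s -> B s) -> (forall i t, rho i = inl t -> Q t) ->
    (sat (asg x rho) phi <-> sat (asg y rho) phi).

Lemma tp_eq_on_sym B (J : Type) (Q : J -> Prop) x y :
  tp_eq_on B Q x y -> tp_eq_on B Q y x.
Proof. by move=> Hxy phi rho Hr Hl; rewrite (Hxy phi rho Hr Hl). Qed.

Lemma tp_eq_on_trans B (J : Type) (Q : J -> Prop) x y z :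
  tp_eq_on B Q x y -> tp_eq_on B Q y z -> tp_eq_on B Q x z.
Proof. by move=> Hxy Hyz phi rho Hr Hl; rewrite (Hxy phi rho Hr Hl) (Hyz phi rho Hr Hl). Qed.

Lemma tp_eq_on_reassign B (J J' : Type) (Q : J -> Prop) (Q' : J' -> Prop)
    (x y : J -> S) (x' y' : J' -> S) (sigma : J' -> J + S) :
  (forall t' t, Q' t' -> sigma t' = inl t -> Q t) ->
  (forall t' s, sigma t' = inr s -> B s) ->
  (forall t', x' t' = valu x (sigma t')) -> (forall t', y' t' = valu y (sigma t')) ->
  tp_eq_on B Q x y -> tp_eq_on B Q' x' y'.
Proof.
move=> HQ HB Hx Hy Hxy phi rho Hr Hl.
have -> : x' = fun t' => valu x (sigma t') by apply: functional_extensionality.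
have -> : y' = fun t' => valu y (sigma t') by apply: functional_extensionality.
rewrite -!asg_reassign; apply: Hxy => i; case E: (rho i) => [t'|s] //=.
- by move=> s; exact: HB.
- by move=> _ [<-]; exact: Hr E.
- by move=> t; apply: HQ; exact: Hl E.
Qed.

Lemma tp_eq_on_sub B B' (J : Type) (Q : J -> Prop) x y :
  (forall s, B' s -> B s) -> tp_eq_on B Q x y -> tp_eq_on B' Q x y.
Proof. by move=> HB Hxy phi rho Hr; apply: Hxy => i s /Hr /HB. Qed.

Lemma plug_rank (X : finType) (a : X -> S) e x : plug a e (enum_rank x) = a x.
Proof. by rewrite /plug valK enum_rankK. Qed.

Lemma plug_ge (X : finType) (a : X -> S) e i : #|X| <= i -> plug a e i = e i.
Proof. by move=> Hi; rewrite /plug insubN // -leqNgt. Qed.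

Lemma asg_as_plug (X : finType) (J : Type) (h : J -> X) B (d0 : S)
    (rho : nat -> J + S) :
  B d0 -> (forall i s, rho i = inr s -> B s) ->
  exists (sg : nat -> nat) (e : nat -> S), (forall i, B (e i)) /\
    forall y : X -> S, asg (fun t => y (h t)) rho = (fun i => plug y e (sg i)).
Proof.
move=> Bd0 Hr.
exists (fun i => if rho i is inl t then nat_of_ord (enum_rank (h t)) else #|X| + i).
exists (fun j => if rho (j - #|X|) is inr s then s else d0); split.
  by move=> i; case E: (rho (i - #|X|)) => //; exact: Hr E.
move=> y; apply: functional_extensionality => i; rewrite /asg.
case E: (rho i) => [t|s] /=; first by rewrite plug_rank.
by rewrite plug_ge ?leq_addr // addKn E.
Qed.

Lemma tp_eq_on_of_tp_eq B (X : finType) (Q : X -> Prop) (d0 : S) (a b : X -> S) :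
  B d0 -> tp_eq B a b -> tp_eq_on B Q a b.
Proof.
move=> Bd0 Hab phi rho Hr _.
have [sg [e [He Hplug]]] := asg_as_plug id Bd0 Hr.
have [phi' Hphi] := rename_ex (fun _ : S => True) phi sg.
by rewrite /sat (Hplug a) (Hplug b) -!Hphi; apply: Hab => i _; exact: He.
Qed.

Lemma tp_eq_of_tp_eq_on B (X : finType) (Q : X -> Prop) (a b : X -> S) :
  (forall t, Q t) -> tp_eq_on B Q a b -> tp_eq B a b.
Proof.
move=> HQ Hab phi e He.
pose rho i := if (insub i : option 'I_#|X|) is Some j then inl (enum_val j) else inr (e i).
have Hplug y : asg y rho = plug y e.
  by apply: functional_extensionality => i; rewrite /asg /rho /plug; case: insub.
rewrite -!Hplug; apply: Hab => // i s; rewrite /rho; case: insubP => [j _ _ //|].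
by rewrite -leqNgt => Hi [<-]; exact: He.
Qed.

Lemma fs_in_asg (M D A0 : S -> Prop) (d0 : S) (J : finType) (x : J -> S) rho phi :
  fs_in M D A0 -> D d0 -> (forall t, A0 (x t)) -> (forall i s, rho i = inr s -> D s) ->
  sat (asg x rho) phi -> exists m : J -> S, (forall t, M (m t)) /\ sat (asg m rho) phi.
Proof.
move=> Hfs Dd0 HA Hr Hx.
pose a : 'I_#|J| -> S := fun j => x (enum_val j).
have [sg [e [He Hplug]]] := asg_as_plug (@enum_rank J) Dd0 Hr.
have [phi' Hphi] := rename_ex (fun _ : S => True) phi sg.
have Ha : asg x rho = asg (fun t => a (enum_rank t)) rho.
  by congr asg; apply: functional_extensionality => t; rewrite /a enum_rankK.
have [m [HM Hm]] : exists m : 'I_#|J| -> S, (forall j, M (m j)) /\ sat (plug m e) phi'.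
  apply: (Hfs _ a) => [j|i _|]; [exact: HA | exact: He |].
  by rewrite /sat Hphi -Hplug -Ha.
by exists (fun t => m (enum_rank t)); split=> [t|]; [exact: HM | rewrite /sat Hplug -Hphi].
Qed.

Lemma realize_in_full (M C : S -> Prop) (m0 : S) (N : nat) (z : 'I_N -> S) :
  full M C -> M m0 ->
  exists z' : 'I_N -> S, (forall j, C (z' j)) /\ tp_eq_on M (fun _ => True) z z'.
Proof.
case=> _ Hfull Mm0.
pose p phi e := (forall i, N <= i -> M (e i)) /\ sat (plug z e) phi.
have Hp : complete_type M N p.
  split; first by move=> phi e [].
  split; last by move=> k fam Hfam; exists z => j; exact: (Hfam j).2.
  by move=> phi e He; case: (classic (sat (plug z e) phi)) => H; [left | right].
have [c [Hc Hpc]] := Hfull N p Hp.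
exists c; split=> //; apply: (tp_eq_on_of_tp_eq (d0 := m0)) => // phi e He.
have {}He : forall i, N <= i -> M (e i) by move=> i; rewrite -{1}(card_ord N); exact: He.
split=> H; first exact: Hpc phi e (conj He H).
by apply: NNPP => H'; exact: Hpc (Neg phi) e (conj He H') H.
Qed.

Definition join {J K : Type} (x : J -> S) (z : K -> S) : J + K -> S :=
  fun u => match u with inl t => x t | inr j => z j end.

Lemma tp_eq_on_join_params B (J K : Type) (x y : J -> S) (z : K -> S) :
  (forall j, B (z j)) -> tp_eq_on B (fun _ => True) x y ->
  tp_eq_on B (fun _ => True) (join x z) (join y z).
Proof.
move=> Hz; apply: (tp_eq_on_reassign
  (sigma := fun u => match u with inl t => inl t | inr j => inr (z j) end)) => //.
- by case=> [t|j] s //= [<-].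
- by case.
- by case.
Qed.

(* The heart of the argument: if tp(A0/D) is finitely satisfied in M, then
   over a finite tuple x from A0 the tuples z, z' from D with the same type
   over M remain indistinguishable, i.e. tp(x z/M) = tp(x z'/M).  A formula
   separating them would, by finite satisfiability, be witnessed by a tuple m
   from M, which would separate z from z' over M. *)
Lemma fs_type_invariance (M D A0 : S -> Prop) (d0 : S) (J : finType) (K : Type)
    (x : J -> S) (z z' : K -> S) :
  fs_in M D A0 -> D d0 -> (forall s, M s -> D s) -> (forall t, A0 (x t)) ->
  (forall j, D (z j)) -> (forall j, D (z' j)) ->
  tp_eq_on M (fun _ => True) z z' ->
  tp_eq_on M (fun _ => True) (join x z) (join x z').
Proof.
move=> Hfs Dd0 HMD HA Hz Hz' Hzz'.
suff one_way : forall phi rho, (forall i s, rho i = inr s -> M s) ->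
    sat (asg (join x z) rho) phi -> sat (asg (join x z') rho) phi.
  move=> phi rho Hr _; split; first exact: one_way.
  by move=> H'; apply: NNPP => H; exact: one_way (Neg phi) rho Hr H H'.
move=> phi rho Hr Hxz; apply: NNPP => Hxz'.
(* even variables read the tuple z, odd variables read z' *)
pose par (w : K -> S) (u : J + K) : J + S :=
  match u with inl t => inl t | inr j => inr (w j) end.
pose rhoW i := reassign (par (if odd i then z' else z)) (rho i./2).
have Heven y : (fun i => asg y rhoW i.*2) = asg (join y z) rho.
  by rewrite /rhoW; apply: functional_extensionality => i;
    rewrite /asg odd_double doubleK; case: (rho i) => [[]|].
have Hodd y : (fun i => asg y rhoW i.*2.+1) = asg (join y z') rho.
  by rewrite /rhoW; apply: functional_extensionality => i;
    rewrite /asg /= odd_double uphalf_double; case: (rho i) => [[]|].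
have [phiE HE] := rename_ex (fun _ : S => True) phi double.
have [phiO HO] := rename_ex (fun _ : S => True) phi (fun i => i.*2.+1).
have Hsep y : sat (asg y rhoW) (And phiE (Neg phiO)) <->
              sat (asg (join y z) rho) phi /\ ~ sat (asg (join y z') rho) phi.
  by rewrite /sat /= HE HO Heven Hodd.
have HrW i s : rhoW i = inr s -> D s.
  rewrite /rhoW; case E: (rho i./2) => [[t|j]|s'] //= [<-]; last exact/HMD/(Hr _ _ E).
  by case: (odd i).
have [m [HM /Hsep[Hmz Hmz']]] := fs_in_asg Hfs Dd0 HA HrW (proj2 (Hsep x) (conj Hxz Hxz')).
have Hm : tp_eq_on M (fun _ => True) (join m z) (join m z').
  apply: (tp_eq_on_reassign
    (sigma := fun u => match u with inl t => inr (m t) | inr j => inl j end)) Hzz' => //.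
  - by case=> [t|j] s //= [<-].
  - by case.
  - by case.
by apply: Hmz'; apply/(Hm phi rho Hr (fun _ _ _ => I)).
Qed.

Lemma tp_eq_on_nil B (J : Type) (Q : J -> Prop) (x y : J -> S) :
  (forall t, ~ Q t) -> tp_eq_on B Q x y.
Proof.
move=> HQ phi rho _ Hl; have -> // : asg x rho = asg y rho.
apply: functional_extensionality => i; rewrite /asg.
by case E: (rho i) => [t|s] //; case: (HQ t (Hl _ _ E)).
Qed.
End Semantics.

Section OrderCongruence.
Variables (L : signature) (S : structure L) (M C : S -> Prop) (m0 : S).
Variables (d : Order.disp_t) (I : orderType d) (A : I -> S -> Prop).
Hypotheses (Mm0 : M m0) (Hfull : full M C) (Hfs : fs_sequence M C A).
Arguments Hfs : clear implicits.
Variables (istar : I) (n : nat) (l : 'I_n -> nat).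

Let M_sub_C : forall s, M s -> C s := Hfull.1.

Local Notation J := {k : 'I_n & 'I_(l k)}.
Local Notation B := (CA_lt C A istar).

Definition in_block (k : 'I_n) (u : J + S) : bool :=
  if u is inl t then tag t == k else false.

(* The values of the first N variables under rho outside the k-th block
   (m0 standing in for the positions of block k). *)
Definition old_part (y : J -> S) (k : 'I_n) (rho : nat -> J + S) (N : nat) :
    'I_N -> S :=
  fun j => if in_block k (rho j) then m0 else valu y (rho j).
Arguments old_part y k rho N : clear implicits.

(* rho, seen as assigning to its first N variables either a position of block k
   or the corresponding position of the old part. *)
Definition block_asg (k : 'I_n) (rho : nat -> J + S) (N : nat) :
    nat -> ('I_(l k) + 'I_N) + S :=
  fun i => if (insub i : option 'I_N) is Some j then
      (if rho i is inl t then
         (if tag t =P k is ReflectT E then inl (inl (cast_ord (congr1 l E) (tagged t)))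
          else inl (inr j))
       else inl (inr j))
    else inr m0.
Arguments block_asg k rho N : clear implicits.

Lemma block_asg_param (k : 'I_n) (rho : nat -> J + S) (N i : nat) (s : S) :
  block_asg k rho N i = inr s -> s = m0.
Proof.
rewrite /block_asg; case: insub => [j|[<-]] //.
by case: (rho i) => [t|] //; case: (tag t =P k).
Qed.

Lemma cast_block (y : forall k : 'I_n, 'I_(l k) -> S) (k k' : 'I_n) (E : k' = k)
    (p : 'I_(l k')) :
  y k (cast_ord (congr1 l E) p) = y k' p.
Proof. by case: k / E; rewrite cast_ord_id. Qed.

Lemma sat_block_asg (y : forall k : 'I_n, 'I_(l k) -> S) (k : 'I_n)
    (rho : nat -> J + S) (phi : formula L) :
  let N := fbound phi in
  sat (asg (concat_tuple y) rho) phi <->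
  sat (asg (join (y k) (old_part (concat_tuple y) k rho N)) (block_asg k rho N)) phi.
Proof.
apply: sat_bound => i Hi; rewrite /asg /block_asg.
case: insubP => [j _ /= Ej|]; last by rewrite Hi.
case E: (rho i) => [t|s] /=; last by rewrite /old_part Ej E.
case: (tag t =P k) => [Ek|/eqP/negbTE Nk] /=; first by rewrite cast_block.
by rewrite /old_part /in_block Ej E /= Nk.
Qed.

Lemma tp_eq_old_parts (x y : J -> S) (k : 'I_n) (rho : nat -> J + S) (N : nat) :
  (forall i s, rho i = inr s -> B s) -> (forall i t, rho i = inl t -> tag t <= k) ->
  tp_eq_on B (fun t : J => tag t < k) x y ->
  tp_eq_on M (fun _ => True) (old_part x k rho N) (old_part y k rho N).
Proof.
move=> Hr Hl Hxy; apply: (tp_eq_on_sub (B := B)) => [s Ms|]; first by left; exact: M_sub_C.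
apply: (tp_eq_on_reassign
  (sigma := fun j : 'I_N => if in_block k (rho j) then inr m0 else rho j)) Hxy.
- move=> j t _; rewrite /in_block; case E: (rho j) => [t'|s] //=.
  by case: ifP => //= /negbT Nk [<-]; rewrite ltn_neqAle Nk (Hl _ _ E).
- move=> j s; case: ifP => [_ [<-]|_ E]; first by left; exact: M_sub_C.
  exact: Hr E.
- by move=> j; rewrite /old_part; case: ifP.
- by move=> j; rewrite /old_part; case: ifP.
Qed.

Section OneSequence.
Variables (ix : 'I_n -> I) (a : forall k : 'I_n, 'I_(l k) -> S).
Arguments a : clear implicits.
Hypotheses (Hi : forall k, (istar <= ix k)%O)
  (Hix : forall k k' : 'I_n, k < k' -> (ix k < ix k')%O)
  (Ha : forall k p, A (ix k) (a k p)).
Arguments Ha : clear implicits.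

Lemma old_part_below (k : 'I_n) (rho : nat -> J + S) (N : nat) :
  (forall i s, rho i = inr s -> B s) -> (forall i t, rho i = inl t -> tag t <= k) ->
  forall j, CA_lt C A (ix k) (old_part (concat_tuple a) k rho N j).
Proof.
move=> Hr Hl j; rewrite /old_part /in_block.
case E: (rho j) => [t|s] /=; last first.
  case: (Hr _ _ E) => [Cs|[i' [Hi' As]]]; [by left | right].
  by exists i'; split=> //; exact: lt_le_trans Hi' (Hi k).
case: eqP => [_|/eqP Nk]; first by left; exact: M_sub_C.
right; exists (ix (tag t)); split; last exact: Ha.
by apply: Hix; rewrite ltn_neqAle Nk (Hl _ _ E).
Qed.

(* Since tp(a k / C A_{<ix k}) is finitely satisfied in M, the old part of an
   assignment may be replaced by any realisation z' of its type over M. *)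
Lemma swap_old_part (k : 'I_n) (phi : formula L) (rho : nat -> J + S)
    (z' : 'I_(fbound phi) -> S) :
  (forall i s, rho i = inr s -> B s) -> (forall i t, rho i = inl t -> tag t <= k) ->
  (forall j, C (z' j)) ->
  tp_eq_on M (fun _ => True) (old_part (concat_tuple a) k rho (fbound phi)) z' ->
  (sat (asg (concat_tuple a) rho) phi <->
   sat (asg (join (a k) z') (block_asg k rho (fbound phi))) phi).
Proof.
move=> Hr Hl Hz'C Hz'; rewrite (sat_block_asg a k).
have HMD s : M s -> CA_lt C A (ix k) s by move=> Ms; left; exact: M_sub_C.
have Hz'D j : CA_lt C A (ix k) (z' j) by left.
apply: (fs_type_invariance (Hfs (ix k)) (HMD _ Mm0) HMD (Ha k) (old_part_below Hr Hl)
  Hz'D Hz') => // i s /block_asg_param -> //.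
Qed.
End OneSequence.

Lemma block_step (ix jx : 'I_n -> I) (a b : forall k : 'I_n, 'I_(l k) -> S) (k : 'I_n) :
  (forall k, (istar <= ix k)%O) -> (forall k, (istar <= jx k)%O) ->
  (forall k k' : 'I_n, k < k' -> (ix k < ix k')%O) ->
  (forall k k' : 'I_n, k < k' -> (jx k < jx k')%O) ->
  (forall k p, A (ix k) (a k p)) -> (forall k p, A (jx k) (b k p)) ->
  tp_eq C (a k) (b k) ->
  tp_eq_on B (fun t : J => tag t < k) (concat_tuple a) (concat_tuple b) ->
  tp_eq_on B (fun t : J => tag t <= k) (concat_tuple a) (concat_tuple b).
Proof.
move=> Hi Hj Hix Hjx Ha Hb Hk Hprev phi rho Hr Hl.
have Hold := tp_eq_old_parts (N := fbound phi) Hr Hl Hprev.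
have [z' [Hz'C Hz']] :=
  realize_in_full (old_part (concat_tuple a) k rho (fbound phi)) Hfull Mm0.
have Hz'b := tp_eq_on_trans (tp_eq_on_sym Hold) Hz'.
rewrite (swap_old_part Hi Hix Ha Hr Hl Hz'C Hz') (swap_old_part Hj Hjx Hb Hr Hl Hz'C Hz'b).
have Hkz' := tp_eq_on_join_params Hz'C
  (tp_eq_on_of_tp_eq (Q := fun _ => True) (M_sub_C Mm0) Hk).
by apply: Hkz' => // i s /block_asg_param ->; exact: M_sub_C.
Qed.
End OrderCongruence.

Theorem proposition2 (L : signature) (S : structure L) (M C : S -> Prop)
    (d : Order.disp_t) (I : orderType d) (A : I -> S -> Prop) :
  elem_sub M -> full M C -> fs_sequence M C A -> order_congruence C A.
Proof.
(* of the elementarity of M only its nonemptiness is needed *)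
move=> [[m0 Mm0] _] Hfull Hfs istar n ix jx l a b Hi Hj Hix Hjx Ha Hb Hab.
(* induction on the number of blocks already known to be interchangeable *)
have prefix m : m <= n -> tp_eq_on (CA_lt C A istar)
    (fun t : {k : 'I_n & 'I_(l k)} => tag t < m) (concat_tuple a) (concat_tuple b).
  elim: m => [_|m IH Hmn]; first exact: tp_eq_on_nil.
  exact: (block_step Mm0 Hfull Hfs (k := Ordinal Hmn) Hi Hj Hix Hjx Ha Hb (Hab _)
    (IH (ltnW Hmn))).
exact: tp_eq_of_tp_eq_on (fun t => ltn_ord (tag t)) (prefix n (leqnn n)).
Qed.
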